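(* There exists a polynomial-time computable function $f$ that maps every PDL-formula to a variable-free PDL-formula such that, for every PDL-formula $\varphi$, $\varphi\in\mathbf{PDL}$ if, and only if, $f(\varphi)\in\mathbf{PDL}$ (i.e., $\mathbf{PDL}$ embeds into its variable-free fragment in polynomial time).
   Context: Fix a countable set $\mathit{Var}=\{p_1,p_2,\ldots\}$ of propositional variables and a countable set $AP=\{a_1,a_2,\ldots\}$ of atomic program terms. PDL formulas and program terms are defined simultaneously by $\varphi ::= p \mid \bot \mid (\varphi\rightarrow\varphi)\mid [\alpha]\varphi$ and $\alpha ::= a \mid (\alpha;\alpha)\mid(\alpha\cup\alpha)\mid \alpha^*$ ($p\in\mathit{Var}$, $a\in AP$). A Kripke model is $\mathfrak{M}=(S,\{R_a\}_{a\in AP},V)$, $S\neq\varnothing$, $R_a\subseteq S\times S$, $V:\mathit{Var}\to2^S$; $R_{\alpha;\beta}$ is the relational composition of $R_\alpha$ and $R_\beta$; $R_{\alpha\cup\beta}=R_\alpha\cup R_\beta$; $R_{\alpha^*}$ is the reflexive transitive closure of $R_\alpha$; $\mathfrak{M},s\models p$ iff $s\in V(p)$; $\bot$ is never true; $\rightarrow$ is classical; $\mathfrak{M},s\models[\alpha]\psi$ iff $\psi$ holds at all $R_\alpha$-successors of $s$. A formula is valid if it is true at every state of every model; $\mathbf{PDL}$ is the set of valid PDL-formulas. A formula is variable-free if it contains no propositional variables; the variable-free fragment of $\mathbf{PDL}$ is the set of variable-free formulas in $\mathbf{PDL}$. *)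

From mathcomp Require Import all_boot.
From Stdlib Require Import Relations BinPos.

Unset Printing Implicit Defensive.

Inductive prog : Type :=
| PAtom : nat -> prog
| PSeq  : prog -> prog -> prog
| PCup  : prog -> prog -> prog
| PStar : prog -> prog.

Inductive form : Type :=
| FVar : nat -> form
| FBot : form
| FImp : form -> form -> form
| FBox : prog -> form -> form.

Fixpoint var_free (phi : form) : Prop :=
  match phi with
  | FVar _ => False
  | FBot => True
  | FImp a b => var_free a /\ var_free b
  | FBox _ b => var_free b
  end.

Record kmodel := KModel {
  kS : Type;
  kR : nat -> kS -> kS -> Prop;
  kV : nat -> kS -> Prop }.

Fixpoint prog_rel (M : kmodel) (a : prog) : kS M -> kS M -> Prop :=
  match a with
  | PAtom i => kR M i
  | PSeq a b => fun s u => exists t, prog_rel M a s t /\ prog_rel M b t u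
  | PCup a b => fun s u => prog_rel M a s u \/ prog_rel M b s u
  | PStar a => clos_refl_trans (kS M) (prog_rel M a)
  end.

Fixpoint sat (M : kmodel) (s : kS M) (phi : form) : Prop :=
  match phi with
  | FVar i => kV M i s
  | FBot => False
  | FImp a b => sat M s a -> sat M s b
  | FBox a b => forall t, prog_rel M a s t -> sat M t b
  end.

(* phi \in PDL: true at every state of every model (the state s
   witnesses nonemptiness of the carrier). *)
Definition pdl_valid (phi : form) : Prop :=
  forall (M : kmodel) (s : kS M), sat M s phi.

(* (Polish notation; indices written in binary).                    *)

Inductive sym : Type :=
| SVar | SProg | SBot | SImp | SBox | SSeq | SCup | SStar | S0 | S1 | SEnd.

Fixpoint pos_bits (p : positive) : seq sym :=
  match p with
  | xH => [::]
  | xO q => S0 :: pos_bits q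
  | xI q => S1 :: pos_bits q
  end.

(* binary code of i+1 (least significant bit first), terminated by SEnd *)
Definition enc_nat (i : nat) : seq sym :=
  S1 :: pos_bits (Pos.of_succ_nat i) ++ [:: SEnd].

Fixpoint enc_prog (a : prog) : seq sym :=
  match a with
  | PAtom i => SProg :: enc_nat i
  | PSeq a b => SSeq :: enc_prog a ++ enc_prog b
  | PCup a b => SCup :: enc_prog a ++ enc_prog b
  | PStar a => SStar :: enc_prog a
  end.

Fixpoint enc_form (phi : form) : seq sym :=
  match phi with
  | FVar i => SVar :: enc_nat i
  | FBot => [:: SBot]
  | FImp a b => SImp :: enc_form a ++ enc_form b
  | FBox a b => SBox :: enc_prog a ++ enc_form b
  end.

Inductive dir : Type := DLeft | DRight | DStay.

Record TM := {
  tm_Q : finType;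
  tm_G : finType;
  tm_start : tm_Q;
  tm_halt : tm_Q;
  tm_blank : tm_G;
  tm_in : sym -> tm_G;
  tm_out : tm_G -> option sym;
  tm_delta : tm_Q -> tm_G -> tm_Q * tm_G * dir }.

(* configuration: state, cells left of head (nearest first),
   scanned cell, cells right of head *)
Definition config (M : TM) : Type :=
  (tm_Q M * seq (tm_G M) * tm_G M * seq (tm_G M))%type.

Definition tm_init (M : TM) (w : seq sym) : config M :=
  match map (tm_in M) w with
  | [::] => (tm_start M, [::], tm_blank M, [::])
  | x :: r => (tm_start M, [::], x, r)
  end.

Definition tm_step (M : TM) (c : config M) : config M :=
  let: (q, l, x, r) := c in
  if q == tm_halt M then c else
  let: (q', y, d) := tm_delta M q x in
  match d with
  | DStay => (q', l, y, r)
  | DLeft =>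
      match l with
      | [::] => (q', [::], tm_blank M, y :: r)
      | z :: l' => (q', l', z, y :: r)
      end
  | DRight =>
      match r with
      | [::] => (q', y :: l, tm_blank M, [::])
      | z :: r' => (q', y :: l, z, r')
      end
  end.

Definition tm_run (M : TM) (t : nat) (w : seq sym) : config M :=
  iter t ((@tm_step M)) (tm_init M w).

Fixpoint read_out (M : TM) (s : seq (tm_G M)) : seq sym :=
  match s with
  | [::] => [::]
  | g :: s' => match tm_out M g with
               | Some a => a :: read_out M s'
               | None => [::]
               end
  end.

Definition tm_halted_with (M : TM) (c : config M) (out : seq sym) : Prop :=
  let: (q, _, x, r) := c in q = tm_halt M /\ read_out M (x :: r) = out.

Definition poly_time_form_fun (f : form -> form) : Prop :=
  exists (M : TM) (c k : nat), forall phi : form,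
    exists t, t <= c * (size (enc_form phi)) ^ k + c /\
      tm_halted_with M (tm_run M t (enc_form phi)) (enc_form (f phi)).

(* Replace every variable p_i by [a_(2i+2)]⊥ and every atomic program a_j by a_(2j+1).
   A model of the translation is a model of the original formula once p_i is read as
   [a_(2i+2)]⊥; conversely, a model of the original formula becomes one of the
   translation by letting a_(2i+2) be the identity on the states refuting p_i.
   On the Polish binary encoding, the translation is computed by a four-state sequential
   transducer emitting at most two symbols per input symbol.  A single-tape machine runs
   any such transducer in quadratic time: it marks each input cell as consumed when it
   reads it, walks right past the input to append the output, and walks back to the last
   consumed cell. *)

From HB Require Import structures.
From mathcomp Require Import all_boot zify.
From Stdlib Require Import Relations BinPos Classical.

Fixpoint tr_prog (a : prog) : prog :=
  match a with
  | PAtom j => PAtom j.*2.+1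
  | PSeq a b => PSeq (tr_prog a) (tr_prog b)
  | PCup a b => PCup (tr_prog a) (tr_prog b)
  | PStar a => PStar (tr_prog a)
  end.

Fixpoint tr_form (phi : form) : form :=
  match phi with
  | FVar i => FBox (PAtom i.*2.+2) FBot
  | FBot => FBot
  | FImp phi psi => FImp (tr_form phi) (tr_form psi)
  | FBox a psi => FBox (tr_prog a) (tr_form psi)
  end.

Lemma var_free_tr_form phi : var_free (tr_form phi).
Proof. by elim: phi => //= phi IHphi psi IHpsi. Qed.

Lemma clos_refl_trans_mono (T : Type) (R R' : relation T) :
  inclusion T R R' -> inclusion T (clos_refl_trans T R) (clos_refl_trans T R').
Proof.
move=> sub_RR' x y; elim=> [x' y' /sub_RR'|x'|x' y' z' _ IHxy _ IHyz].
- exact: rt_step.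
- exact: rt_refl.
- exact: rt_trans IHxy IHyz.
Qed.

Section Relabelling.

Variables (T : Type) (R R' : nat -> T -> T -> Prop) (V V' : nat -> T -> Prop).
Hypothesis odd_atoms : forall j x y, R' j.*2.+1 x y <-> R j x y.
Hypothesis even_atoms : forall i x, (forall y, ~ R' i.*2.+2 x y) <-> V i x.

Lemma prog_rel_tr_prog a x y :
  prog_rel (KModel T R' V') (tr_prog a) x y <-> prog_rel (KModel T R V) a x y.
Proof.
elim: a x y => [j|a IHa b IHb|a IHa b IHb|a IHa] x y /=.
- exact: odd_atoms.
- by split=> -[t [/IHa ? /IHb ?]]; exists t.
- by split=> -[/IHa|/IHb]; [left|right|left|right].
- by split; apply: clos_refl_trans_mono => x' y' /IHa.
Qed.

Lemma sat_tr_form phi x :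
  sat (KModel T R' V') x (tr_form phi) <-> sat (KModel T R V) x phi.
Proof.
elim: phi x => [i||phi IHphi psi IHpsi|a psi IHpsi] x /=.
- exact: even_atoms.
- by [].
- by split=> imp /IHphi /imp /IHpsi.
- by split=> box t /prog_rel_tr_prog /box /IHpsi.
Qed.

End Relabelling.

Lemma pdl_valid_tr_form phi : pdl_valid phi <-> pdl_valid (tr_form phi).
Proof.
split=> valid [T R V] x.
- pose V' i x := forall y, ~ R i.*2.+2 x y.
  by apply/(sat_tr_form _ (fun j => R j.*2.+1) R V' V) => //; apply: valid.
- pose R' k x y := if odd k then R k./2 x y else x = y /\ ~ V k./2.-1 x.
  apply/(sat_tr_form _ R R' V V) => [j x' y'|i x'|]; last exact: valid.
  + by rewrite /R' /= odd_double /= uphalf_double.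
  + rewrite /R' /= odd_double half_double /=.
    by split=> [no_loop|Vx y [_ /(_ Vx)]] //; apply: NNPP => nVx; exact: (no_loop x').
Qed.

Definition sym_nat (s : sym) : nat :=
  match s with
  | SVar => 0 | SProg => 1 | SBot => 2 | SImp => 3 | SBox => 4 | SSeq => 5
  | SCup => 6 | SStar => 7 | S0 => 8 | S1 => 9 | SEnd => 10
  end.

Definition sym_enum : seq sym :=
  [:: SVar; SProg; SBot; SImp; SBox; SSeq; SCup; SStar; S0; S1; SEnd].

Lemma sym_ordK :
  cancel (fun s => inord (sym_nat s) : 'I_11) (fun i => nth SVar sym_enum i).
Proof. by case; rewrite inordK. Qed.

HB.instance Definition _ := Finite.copy sym (can_type sym_ordK).

Inductive cell := Blank | Consumed | Input of sym | Output of sym.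

Definition cell_code (x : cell) : option (option (sym + sym)) :=
  match x with
  | Blank => None | Consumed => Some None
  | Input s => Some (Some (inl s)) | Output s => Some (Some (inr s))
  end.

Definition cell_decode (c : option (option (sym + sym))) : cell :=
  match c with
  | None => Blank | Some None => Consumed
  | Some (Some (inl s)) => Input s | Some (Some (inr s)) => Output s
  end.

Lemma cell_codeK : cancel cell_code cell_decode. Proof. by case. Qed.

HB.instance Definition _ := Finite.copy cell (can_type cell_codeK).

Inductive tm_state (S : Type) :=
  Fetch of S | Emit of S & option sym & option sym | Return of S | Halt.
Arguments Fetch {S}.
Arguments Emit {S}.
Arguments Return {S}.
Arguments Halt {S}.

Definition tm_state_code S (q : tm_state S) :
    option ((S + S) + (S * option sym * option sym)) :=
  match q with
  | Fetch g => Some (inl (inl g)) | Return g => Some (inl (inr g))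
  | Emit g o1 o2 => Some (inr (g, o1, o2)) | Halt => None
  end.

Definition tm_state_decode S (c : option ((S + S) + (S * option sym * option sym))) :
    tm_state S :=
  match c with
  | Some (inl (inl g)) => Fetch g | Some (inl (inr g)) => Return g
  | Some (inr (g, o1, o2)) => Emit g o1 o2 | None => Halt
  end.

Lemma tm_state_codeK S : cancel (@tm_state_code S) (@tm_state_decode S).
Proof. by case. Qed.

HB.instance Definition _ (S : finType) :=
  Finite.copy (tm_state S) (can_type (@tm_state_codeK S)).

Section SequentialTransducer.

Variable S : finType.
Variable trans : S -> sym -> S * option sym * option sym.

(* [(None, Some c)] emits nothing, in [transduce] as on the machine. *)
Definition emitted (o1 o2 : option sym) : seq sym :=
  if o1 is Some c then c :: (if o2 is Some e then [:: e] else [::]) else [::].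

Lemma size_emitted o1 o2 : size (emitted o1 o2) <= 2.
Proof. by case: o1 => [?|] //; case: o2. Qed.

Fixpoint transduce (g : S) (u : seq sym) : seq sym :=
  if u is b :: u' then
    let: (g', o1, o2) := trans g b in emitted o1 o2 ++ transduce g' u'
  else [::].

Definition transducer_delta (q : tm_state S) (x : cell) : tm_state S * cell * dir :=
  match q with
  | Fetch g =>
      if x is Input b then
        let: (g', o1, o2) := trans g b in (Emit g' o1 o2, Consumed, DRight)
      else (Halt, x, DStay)
  | Emit g o1 o2 =>
      if x is Blank then
        if o1 is Some c then (Emit g o2 None, Output c, DRight)
        else (Return g, Blank, DStay)
      else (Emit g o1 o2, x, DRight)
  | Return g =>
      if x is Consumed then (Fetch g, Consumed, DRight) else (Return g, x, DLeft)
  | Halt => (Halt, x, DStay)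
  end.

Definition output_sym (x : cell) : option sym := if x is Output s then Some s else None.

Variable g0 : S.

Definition transducer_tm : TM :=
  {| tm_Q := tm_state S; tm_G := cell; tm_start := Fetch g0; tm_halt := Halt;
     tm_blank := Blank; tm_in := Input; tm_out := output_sym;
     tm_delta := transducer_delta |}.

Local Notation step := (@tm_step transducer_tm).

Definition conf (q : tm_state S) (l w : seq cell) : config transducer_tm :=
  (q, l, head Blank w, behead w).

Section Moves.

Variables (q q' : tm_state S) (x y : cell).
Hypothesis q_not_halted : q <> Halt.

Lemma step_right l r : transducer_delta q x = (q', y, DRight) ->
  step (q, l, x, r) = conf q' (y :: l) r.
Proof. by move=> hd; rewrite /tm_step /= ifN_eq ?hd; [case: r | apply/eqP]. Qed.

Lemma step_left z l r : transducer_delta q x = (q', y, DLeft) ->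
  step (q, z :: l, x, r) = (q', l, z, y :: r).
Proof. by move=> hd; rewrite /tm_step /= ifN_eq ?hd //; apply/eqP. Qed.

End Moves.

Lemma emit_move_right g o1 o2 l s m : all (predC1 Blank) s ->
  iter (size s) step (conf (Emit g o1 o2) l (s ++ nseq m Blank))
  = (Emit g o1 o2, rev s ++ l, Blank, nseq m.-1 Blank).
Proof.
elim: s l => [|y s IH] l /=; first by case: m.
move=> /andP[y_nonblank s_nonblank].
rewrite -iterS iterSr (step_right _ (Emit g o1 o2) _ y) //; last by case: y y_nonblank.
by rewrite IH // rev_cons cat_rcons.
Qed.

Lemma emit_write g o1 o2 l m :
  iter (size (emitted o1 o2)).+1 step (Emit g o1 o2, l, Blank, nseq m Blank)
  = (Return g, rev (map Output (emitted o1 o2)) ++ l, Blank,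
     nseq (m - size (emitted o1 o2)) Blank).
Proof.
case: o1 => [c|]; last by rewrite /= subn0.
by case: o2 => [e|]; case: m => [|[|m]]; rewrite //= ?subSS ?subn0.
Qed.

Lemma return_move_left g t l x r : all (predC1 Consumed) t -> x != Consumed ->
  iter (size t).+1 step (Return g, t ++ Consumed :: l, x, r)
  = (Return g, l, Consumed, rev t ++ x :: r).
Proof.
elim: t x r => [|y t IH] x r; first by move=> _; case: x.
move=> /andP[y_live t_live] x_live.
rewrite iterSr (step_left _ (Return g) _ x) //; last by case: x x_live.
by rewrite IH // rev_cons cat_rcons.
Qed.

Lemma fetch_round g a b u o m : exists2 k, k <= 8 + 2 * size u + 2 * size o &
  exists m', iter k step
    (conf (Fetch g) (nseq a Consumed)
       (map Input (b :: u) ++ map Output o ++ nseq m Blank))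
  = let: (g', o1, o2) := trans g b in
    conf (Fetch g') (nseq a.+1 Consumed)
      (map Input u ++ map Output (o ++ emitted o1 o2) ++ nseq m' Blank).
Proof.
case def_next: (trans g b) => [[g1 o1] o2].
set s := map Input u ++ map Output o; set e := emitted o1 o2.
have s_nonblank : all (predC1 Blank) s.
  by rewrite all_cat; apply/andP; split; apply/allP => _ /mapP[? _ ->].
have s_live : all (predC1 Consumed) s.
  by rewrite all_cat; apply/andP; split; apply/allP => _ /mapP[? _ ->].
have e_live : all (predC1 Consumed) (rev (map Output e)).
  by rewrite all_rev; apply/allP => _ /mapP[? _ ->].
set t := rev (map Output e) ++ rev s.
(* Read [b] and cross [s]; write [e]; walk back over [t] and step onto the next input. *)
exists ((size t).+2 + (size e).+1 + (size s).+1).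
  rewrite /t size_cat !size_rev size_map /s size_cat !size_map.
  by have : size e <= 2 := size_emitted o1 o2; lia.
exists (m.-1 - size e).+1.
rewrite !iterD (iterSr (size s)) (step_right _ (Emit g1 o1 o2) _ Consumed) //; last first.
  by rewrite /= def_next.
rewrite [behead _]/= catA -/s emit_move_right // emit_write -/e.
rewrite [X in (Return _, X, _, _)]catA -/t.
rewrite iterS return_move_left ?all_cat ?e_live ?all_rev //.
rewrite (step_right _ (Fetch g1) _ Consumed) // /t rev_cat !revK /s map_cat -!catA.
by case: (m.-1 - size e).
Qed.

Lemma transducer_tm_run u g a o m :
  exists2 k, k <= size u * (6 * size u + 2 * size o + 8) + 1 &
  exists m', iter k step
    (conf (Fetch g) (nseq a Consumed) (map Input u ++ map Output o ++ nseq m Blank))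
  = conf Halt (nseq (a + size u) Consumed)
      (map Output (o ++ transduce g u) ++ nseq m' Blank).
Proof.
elim: u g a o m => [|b u IH] g a o m.
  exists 1 => //; exists m; rewrite addn0 cats0 /=.
  by case: o => [|c o] /=; [case: m|].
have [k1 k1_le [m1 round]] := fetch_round g a b u o m.
case def_next: (trans g b) round => [[g1 o1] o2] round.
have [k2 k2_le [m2 rest]] := IH g1 a.+1 (o ++ emitted o1 o2) m1.
exists (k2 + k1).
  by move: k2_le; rewrite size_cat /=; have := size_emitted o1 o2; nia.
by exists m2; rewrite iterD round rest /= def_next catA addnS.
Qed.

Lemma read_out_outputs o m :
  read_out transducer_tm (head Blank (map Output o ++ nseq m Blank)
                          :: behead (map Output o ++ nseq m Blank)) = o.
Proof.
case: o => [|c o] /=; first by case: m.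
by congr (_ :: _); elim: o => [|d o IH] /=; [case: m | rewrite IH].
Qed.

Lemma transducer_tm_correct u : exists2 t, t <= 14 * size u ^ 2 + 14 &
  tm_halted_with transducer_tm (tm_run transducer_tm t u) (transduce g0 u).
Proof.
have [k k_le [m' run]] := transducer_tm_run u g0 0 [::] 0.
exists k; first by move: k_le; rewrite muln0 addn0; nia.
have init : tm_init transducer_tm u = conf (Fetch g0) [::] (map Input u ++ [::] ++ [::]).
  by rewrite /tm_init /conf cat0s cats0; case: (u).
by rewrite /tm_run init run /=; split => //; apply: read_out_outputs.
Qed.

End SequentialTransducer.

Arguments transduce {S}.
Arguments transducer_tm {S}.
Arguments transducer_tm_correct {S}.

Lemma transducer_poly_time (S : finType) trans (g0 : S) (f : form -> form) :
  (forall phi, transduce trans g0 (enc_form phi) = enc_form (f phi)) ->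
  poly_time_form_fun f.
Proof.
move=> computes_f; exists (transducer_tm trans g0), 14, 2 => phi.
have [t t_le halted] := transducer_tm_correct trans g0 (enc_form phi).
by exists t; rewrite -computes_f.
Qed.

Inductive tr_state := Copy | AfterProg | AfterVar | VarIndex.

Definition tr_state_code (g : tr_state) : bool * bool :=
  match g with
  | Copy => (false, false) | AfterProg => (false, true)
  | AfterVar => (true, false) | VarIndex => (true, true)
  end.

Definition tr_state_decode (c : bool * bool) : tr_state :=
  match c with
  | (false, false) => Copy | (false, true) => AfterProg
  | (true, false) => AfterVar | (true, true) => VarIndex
  end.

Lemma tr_state_codeK : cancel tr_state_code tr_state_decode. Proof. by case. Qed.

HB.instance Definition _ := Finite.copy tr_state (can_type tr_state_codeK).

(* [enc_nat n] is [S1], the bits of [n + 1] below its leading one, then [SEnd]; thus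
   inserting [S0] (resp. [S1]) after the first symbol turns [n] into [2n+1]
   (resp. [2n+2]). *)
Definition tr_trans (g : tr_state) (s : sym) : tr_state * option sym * option sym :=
  match g, s with
  | Copy, SProg => (AfterProg, Some SProg, None)
  | Copy, SVar => (AfterVar, Some SBox, Some SProg)
  | Copy, _ => (Copy, Some s, None)
  | AfterProg, _ => (Copy, Some s, Some S0)
  | AfterVar, _ => (VarIndex, Some s, Some S1)
  | VarIndex, SEnd => (Copy, Some SEnd, Some SBot)
  | VarIndex, _ => (VarIndex, Some s, None)
  end.

Lemma of_succ_nat_odd j : Pos.of_succ_nat j.*2.+1 = xO (Pos.of_succ_nat j).
Proof. by elim: j => //= j ->. Qed.

Lemma of_succ_nat_even j : Pos.of_succ_nat j.*2.+2 = xI (Pos.of_succ_nat j).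
Proof. by elim: j => //= j ->. Qed.

Lemma enc_nat_odd j : enc_nat j.*2.+1 = S1 :: S0 :: behead (enc_nat j).
Proof. by rewrite /enc_nat of_succ_nat_odd. Qed.

Lemma enc_nat_even j : enc_nat j.*2.+2 = S1 :: S1 :: behead (enc_nat j).
Proof. by rewrite /enc_nat of_succ_nat_even. Qed.

Lemma enc_nat_head i : enc_nat i = S1 :: behead (enc_nat i).
Proof. by []. Qed.

Lemma transduce_copy_index i rest :
  transduce tr_trans Copy (behead (enc_nat i) ++ rest)
  = behead (enc_nat i) ++ transduce tr_trans Copy rest.
Proof. by rewrite /enc_nat /=; elim: (Pos.of_succ_nat i) => //= p ->. Qed.

Lemma transduce_var_index i rest :
  transduce tr_trans VarIndex (behead (enc_nat i) ++ rest)
  = behead (enc_nat i) ++ SBot :: transduce tr_trans Copy rest.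
Proof. by rewrite /enc_nat /=; elim: (Pos.of_succ_nat i) => //= p ->. Qed.

Opaque enc_nat.

Lemma transduce_enc_prog a rest :
  transduce tr_trans Copy (enc_prog a ++ rest)
  = enc_prog (tr_prog a) ++ transduce tr_trans Copy rest.
Proof.
elim: a rest => [j|a IHa b IHb|a IHa b IHb|a IHa] rest /=.
- by rewrite enc_nat_odd enc_nat_head /= transduce_copy_index.
- by rewrite -catA IHa IHb catA.
- by rewrite -catA IHa IHb catA.
- by rewrite IHa.
Qed.

Lemma transduce_enc_form phi rest :
  transduce tr_trans Copy (enc_form phi ++ rest)
  = enc_form (tr_form phi) ++ transduce tr_trans Copy rest.
Proof.
elim: phi rest => [i||phi IHphi psi IHpsi|a psi IHpsi] rest //=.
- by rewrite enc_nat_even enc_nat_head /= transduce_var_index -catA.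
- by rewrite -catA IHphi IHpsi catA.
- by rewrite -catA transduce_enc_prog IHpsi catA.
Qed.

Lemma transduce_tr_form phi :
  transduce tr_trans Copy (enc_form phi) = enc_form (tr_form phi).
Proof. by have := transduce_enc_form phi [::]; rewrite !cats0. Qed.

Theorem theorem3 :
  exists f : form -> form,
    poly_time_form_fun f /\
    (forall phi : form, var_free (f phi)) /\
    (forall phi : form, pdl_valid phi <-> pdl_valid (f phi)).
Proof.
exists tr_form; split; first exact: transducer_poly_time transduce_tr_form.
by split; [exact: var_free_tr_form | exact: pdl_valid_tr_form].
Qed.
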